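(* Let $K\ge0$ and $p\in(1,2)$. Then there exists $\varepsilon\in(0,\frac{p-1}{2})$ (depending on $K$ and $p$) such that for all $a,b\in\mathbb R^d$, $$\Psi(a,b,p)\ge\Gamma(a,b,K,\varepsilon,p),$$ where $$\Psi(a,b,p)=|a+b|^p-|a|^p-p|a|^{p-2}\langle a,b\rangle\mathbf 1_{a\ne0},$$ $$\Gamma(a,b,K,\varepsilon,p)=2Kp|a|^{p-1}|b|\mathbf 1_{|b|\ge\vartheta(\varepsilon,p)|a|}+p\varepsilon|a|^{p-2}|b|^2\mathbf 1_{|b|<\vartheta(\varepsilon,p)|a|},$$ $$\vartheta(\varepsilon,p)=\sqrt{\frac12\Big(\frac{p-1}{2\varepsilon}\Big)^{\frac{2}{2-p}}+\frac12}-1.$$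
   Context: In $\Gamma$, when $a=0$ the second indicator vanishes and $|a|^{p-1}=0$, so $\Gamma(0,b,K,\varepsilon,p)=0$ for $b\neq 0$ interpreted via the first term (which equals $0$). *)

From HB Require Import structures.
From mathcomp Require Import all_boot all_order all_algebra.
From mathcomp Require Import all_classical all_reals all_analysis.
Set Implicit Arguments. Unset Strict Implicit. Unset Printing Implicit Defensive.
Import Order.TTheory GRing.Theory Num.Theory.
Local Open Scope ring_scope.

Section Defs.
Variables (R : realType) (d : nat).

Definition dotv (a b : 'rV[R]_d) : R := \sum_(i < d) a ord0 i * b ord0 i.
Definition normv (a : 'rV[R]_d) : R := Num.sqrt (dotv a a).

Definition Psi (a b : 'rV[R]_d) (p : R) : R :=
  normv (a + b) `^ p - normv a `^ p
  - (if a != 0 then p * normv a `^ (p - 2) * dotv a b else 0).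

End Defs.

Definition theta (R : realType) (eps p : R) : R :=
  Num.sqrt (2^-1 * (((p - 1) / (2 * eps)) `^ (2 / (2 - p))) + 2^-1) - 1.

Definition Gamma (R : realType) (d : nat) (a b : 'rV[R]_d) (K eps p : R) : R :=
  (if theta eps p * normv a <= normv b
   then 2 * K * p * normv a `^ (p - 1) * normv b else 0)
  + (if normv b < theta eps p * normv a
     then p * eps * normv a `^ (p - 2) * normv b ^+ 2 else 0).

(* Put x = |b|/|a| and psi1 y = |1 + y|^p - 1 - p y, so that psi1 is Psi in
   dimension one at a = 1.  With r = p/2 and phi u = u^r - r u, which increases
   on [0,1] and decreases on [1,oo), Psi a b / |a|^p depends on the angle between
   a and b only through phi (|a + b|^2 / |a|^2); hence it is minimal for b
   parallel or antiparallel to a, and the parallel value psi1 x is the smaller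
   one: Psi a b >= |a|^p psi1 x.  A monotonicity argument gives the Taylor-type
   bound psi1 y >= p (p-1)/2 M^(p-2) y^2 for 0 <= y <= M - 1.  Taking M = 1 + T
   yields psi1 x >= p eps x^2 below a threshold T, and taking M = 2x yields
   psi1 x >= 2 K p x above it as soon as (p-1) T^(p-1) >= 8K.  Finally eps is
   obtained from T by inverting theta (., p) explicitly. *)

From HB Require Import structures.
From mathcomp Require Import all_boot all_order all_algebra.
From mathcomp Require Import all_classical all_reals all_analysis.
From mathcomp Require Import ring lra.
Set Implicit Arguments. Unset Strict Implicit. Unset Printing Implicit Defensive.
Import Order.TTheory GRing.Theory Num.Theory.
Import numFieldNormedType.Exports.
Local Open Scope ring_scope.

Section PowR.
Context {R : realType}.

Lemma powR_le_tangent1 (r t : R) : 0 <= r <= 1 -> 0 <= t ->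
  t `^ r <= 1 + r * (t - 1).
Proof.
move=> /andP[r0 r1] t0.
have [->|rn0] := eqVneq r 0; first by rewrite powRr0 mul0r addr0.
have [->|rn1] := eqVneq r 1; first by rewrite powRr1 // mul1r addrC subrK.
have r_gt0 : 0 < r by rewrite lt_def rn0 r0.
have r_lt1 : r < 1 by rewrite lt_def eq_sym rn1 r1.
(* Young's inequality with the conjugate exponents 1/r and 1/(1-r) *)
have := @conjugate_powR R (t `^ r) 1 r^-1 (1 - r)^-1 (powR_ge0 _ _) ler01.
rewrite !invr_gt0 subr_gt0 !invrK r_gt0 r_lt1 => /(_ isT isT).
rewrite -powRrM mulfV // powRr1 // !powR1 mulr1 => /(_ ltac:(ring)).
lra.
Qed.

Lemma powR_le_tangent (r v w : R) : 0 <= r <= 1 -> 0 < v -> 0 <= w ->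
  w `^ r <= v `^ r + r * v `^ (r - 1) * (w - v).
Proof.
move=> r01 v0 w0.
have v_neq0 : v != 0 by rewrite gt_eqF.
have wv0 : 0 <= w / v := divr_ge0 w0 (ltW v0).
have -> : w = v * (w / v) by rewrite mulrC divfK.
rewrite powRM ?(ltW v0) // powRB ?v_neq0 ?implybT // powRr1 ?(ltW v0) //.
apply: le_trans (ler_wpM2l (powR_ge0 _ _) (powR_le_tangent1 r01 wv0)) _.
by rewrite -subr_ge0 [X in 0 <= X](_ : _ = 0) //; field.
Qed.

Lemma le0_ger_powR (r x y : R) : r <= 0 -> 0 < x -> x <= y -> y `^ r <= x `^ r.
Proof.
move=> r0 x0 xy.
have y0 : 0 < y := lt_le_trans x0 xy.
have [s -> s0] : exists2 s, r = - s & 0 <= s by exists (- r); rewrite ?opprK ?oppr_ge0.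
rewrite !powRN lef_pV2 ?posrE ?powR_gt0 //.
by apply: ge0_ler_powR => //; rewrite nnegrE ltW.
Qed.

Lemma powR_sub_linear_unimodal (r u v : R) : 0 <= r <= 1 -> 0 <= u ->
  (1 <= v <= u) || (u <= v <= 1) -> u `^ r - r * u <= v `^ r - r * v.
Proof.
move=> r01 u0 /orP[/andP[v1 vu]|/andP[uv v1]]; have /andP[r0 r1] := r01.
- have v0 : 0 < v by lra.
  have := powR_le_tangent r01 v0 u0.
  have : v `^ (r - 1) <= 1.
    by have := @le0_ger_powR (r - 1) 1 v; rewrite powR1; apply; lra.
  set V := v `^ (r - 1) => V1 tangent.
  have : 0 <= r * ((1 - V) * (u - v)) by rewrite !mulr_ge0 ?subr_ge0.
  lra.
- have [v0|v0] := leP v 0; first by have -> : u = v by lra.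
  have := powR_le_tangent r01 v0 u0.
  have : 1 <= v `^ (r - 1).
    by have := @le0_ger_powR (r - 1) v 1; rewrite powR1; apply; lra.
  set V := v `^ (r - 1) => V1 tangent.
  have : 0 <= r * ((V - 1) * (v - u)) by rewrite !mulr_ge0 ?subr_ge0.
  lra.
Qed.

Lemma powR_normr_sqr (y r : R) : `|y| `^ r = (y ^+ 2) `^ (r / 2).
Proof.
rewrite -real_normK ?num_real // -powR_mulrn // -powRrM; congr (_ `^ _).
by rewrite mulrC divfK // pnatr_eq0.
Qed.

Lemma exists_ge1_powR_ge (q L : R) : 0 < q -> 0 <= L ->
  exists2 T, 1 <= T & L <= q * T `^ q.
Proof.
move=> q0 L0; set c := 1 + L / q.
have c_ge1 : 1 <= c by rewrite lerDl divr_ge0 // ltW.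
exists (c `^ q^-1).
  by rewrite -[X in X <= _](powRr0 c) ler_powR // invr_ge0 ltW.
rewrite -powRrM mulVf ?gt_eqF // powRr1; last lra.
by rewrite /c mulrDr mulr1 [q * _]mulrC divfK ?gt_eqF //; lra.
Qed.

End PowR.

Section Derive.
Context {R : realType}.

Lemma ger0_is_derive_le (f df : R -> R) (a b : R) : a <= b ->
  (forall x, a <= x <= b -> is_derive x 1 f (df x)) ->
  (forall x, a <= x <= b -> 0 <= df x) -> f a <= f b.
Proof.
move=> ab fdf df_ge0.
have fdf_oo x : x \in `]a, b[ -> is_derive x 1 f (df x).
  by rewrite in_itv /= => /andP[ax xb]; apply: fdf; rewrite !ltW.
have cf x : a <= x <= b -> {for x, continuous f}.
  by move=> xab; apply/differentiable_continuous/derivable1_diffP; case: (fdf x xab).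
have [|c] := MVT_segment ab fdf_oo.
  apply: derivable_oo_LRcontinuous_within; split.
  - by move=> x /fdf_oo [].
  - by apply: cvg_at_right_filter; apply: cf; rewrite lexx ab.
  - by apply: cvg_at_left_filter; apply: cf; rewrite lexx ab.
rewrite in_itv /= => cab fE.
by rewrite -subr_ge0 fE mulr_ge0 ?df_ge0 // subr_ge0.
Qed.

Lemma is_derive_powR_affine (p c e z : R) : 0 < c + e * z ->
  is_derive z 1 (fun t => (c + e * t) `^ p) (p * (c + e * z) `^ (p - 1) * e).
Proof.
move=> czpos.
have := @is_derive1_comp _ _ (cst c + e \*: id) z _ _ (is_derive1_powR p czpos)
  (is_deriveD (is_derive_cst c z 1) (is_deriveZ e (is_derive_id z 1))).
by rewrite add0r /GRing.scale /= mulr1.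
Qed.

Lemma is_derive_mulr (k x : R) : is_derive x 1 ( *%R k) k.
Proof.
apply: is_derive_eq (is_deriveZ k (is_derive_id x 1)) _.
by rewrite /GRing.scale /= mulr1.
Qed.

Lemma powR_sym_diff_le (p Y t : R) : 1 <= p <= 2 -> 1 <= Y -> 0 <= t <= 1 -> t < Y ->
  (Y + t) `^ p - (Y - t) `^ p <= 2 * p * Y * t.
Proof.
move=> /andP[p1 p2] Y1 /andP[t0 t1] tY.
pose f x := 2 * p * Y * x - ((Y + 1 * x) `^ p - (Y + -1 * x) `^ p).
pose df x := 2 * p * Y - (p * (Y + 1 * x) `^ (p - 1) * 1 - p * (Y + -1 * x) `^ (p - 1) * -1).
suff : f 0 <= f t by rewrite /f !mulr0 !addr0 subrr subr0 mul1r mulN1r subr_ge0.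
apply: (ger0_is_derive_le (df := df)) => // x /andP[x0 xt].
- apply: is_deriveB; first exact: is_derive_mulr.
  by apply: is_deriveB; apply: is_derive_powR_affine; lra.
- rewrite /df !mulr1 !mul1r mulrN1 mulN1r opprK.
  (* concavity of [u ^ (p - 1)] bounds the mean of its values at [Y +- x] *)
  have r01 : 0 <= p - 1 <= 1 by apply/andP; split; lra.
  have Y0 : 0 < Y by lra.
  have := powR_le_tangent r01 Y0 (_ : 0 <= Y + x).
  have := powR_le_tangent r01 Y0 (_ : 0 <= Y - x).
  have : Y `^ (p - 1) <= Y by apply: ler1_powR; lra.
  move=> YY /(_ ltac:(lra)) tm /(_ ltac:(lra)) tp.
  have : 0 <= p * (2 * Y - ((Y + x) `^ (p - 1) + (Y - x) `^ (p - 1))).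
    by apply: mulr_ge0; lra.
  lra.
Qed.

End Derive.

Section Psi1.
Context {R : realType}.
Variable p : R.
Hypothesis p12 : 1 < p < 2.

Definition psi1 (y : R) := `|1 + y| `^ p - 1 - p * y.

Lemma psi1_ge_quadratic (M y : R) : 0 <= y -> 1 + y <= M ->
  p * (p - 1) / 2 * M `^ (p - 2) * y ^+ 2 <= psi1 y.
Proof.
have /andP[p1 p2] := p12; move=> y0 yM.
rewrite /psi1 ger0_norm; last lra.
set C := p * (p - 1) / 2 * M `^ (p - 2).
pose g z := (1 + 1 * z) `^ p - p * z - C * z ^+ 2.
pose dg z := p * (1 + 1 * z) `^ (p - 1) * 1 - p - C * (2 * z).
suff : g 0 <= g y.
  by rewrite /g !mul1r !mulr0 addr0 powR1 expr0n /= mulr0 !subr0; lra.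
apply: (ger0_is_derive_le (df := dg)) => // z /andP[z0 zy].
- apply: is_deriveB; first apply: is_deriveB.
  + by apply: is_derive_powR_affine; lra.
  + exact: is_derive_mulr.
  + apply: is_derive_eq (is_deriveZ C (is_deriveX 2 (is_derive_id z 1))) _.
    by rewrite /GRing.scale /= mulr1 expr1 mulr_natl.
- rewrite /dg /C mul1r mulr1.
  have r01 : 0 <= p - 1 <= 1 by apply/andP; split; lra.
  have := powR_le_tangent r01 (_ : 0 < 1 + z) ler01.
  rewrite powR1 (_ : p - 1 - 1 = p - 2); last by ring.
  have : M `^ (p - 2) <= (1 + z) `^ (p - 2) by apply: le0_ger_powR; lra.
  set P := (1 + z) `^ (p - 1); set Q := (1 + z) `^ (p - 2); set m := M `^ (p - 2).
  move=> mQ /(_ ltac:(lra)) tangent.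
  have : 0 <= p * (P - 1 - (p - 1) * Q * z) by apply: mulr_ge0; lra.
  have : 0 <= p * (p - 1) * z * (Q - m) by rewrite !mulr_ge0 //; lra.
  lra.
Qed.

Lemma psi1_le_psi1N (t : R) : 0 <= t -> psi1 t <= psi1 (- t).
Proof.
have /andP[p1 p2] := p12; move=> t0.
have p12W : 1 <= p <= 2 by apply/andP; split; lra.
suff : `|1 + t| `^ p - `|1 - t| `^ p <= 2 * p * t by rewrite /psi1; lra.
rewrite (ger0_norm (_ : 0 <= 1 + t)); last lra.
have [t1|t1|->] := ltgtP t 1.
- rewrite ger0_norm; last lra.
  by have := @powR_sym_diff_le _ p 1 t p12W (lexx _); rewrite mulr1; apply; lra.
- rewrite ler0_norm; last lra.
  have := @powR_sym_diff_le _ p t 1 p12W (ltW t1); rewrite mulr1 opprB (addrC 1).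
  by apply; rewrite ?lexx ?ler01.
- rewrite subrr normr0 powR0 ?subr0; last by rewrite gt_eqF //; lra.
  have r01 : 0 <= p - 1 <= 1 by apply/andP; split; lra.
  have := @powR_le_tangent1 _ _ 2 r01 (ler0n _ 2).
  by rewrite -[1 + 1]/(2 : R) -[in X in _ -> X]mulr_powRB1 //; lra.
Qed.

Lemma psi1_le_Psi_normalized (x s n : R) : 0 <= n -> `|s| <= x ->
  n ^+ 2 = 1 + 2 * s + x ^+ 2 -> psi1 x <= n `^ p - 1 - p * s.
Proof.
have /andP[p1 p2] := p12; move=> n0 sx nE.
have [sx1 sx2] : - x <= s /\ s <= x by move: sx; rewrite ler_norml => /andP[].
have r01 : 0 <= p / 2 <= 1 by apply/andP; split; lra.
(* with [r = p/2] and [phi u = u ^ r - r u], both sides are [phi] of a square plus the same constant *)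
have psi1E y : psi1 y = ((1 + y) ^+ 2) `^ (p / 2) - p / 2 * (1 + y) ^+ 2 + p / 2 * (1 + y ^+ 2) - 1.
  by rewrite /psi1 powR_normr_sqr; field.
have -> : n `^ p - 1 - p * s = (n ^+ 2) `^ (p / 2) - p / 2 * n ^+ 2 + p / 2 * (1 + x ^+ 2) - 1.
  by rewrite -powR_normr_sqr ger0_norm // nE; field.
have [v1|v1] := leP 1 (n ^+ 2).
- rewrite psi1E; suff : ((1 + x) ^+ 2) `^ (p / 2) - p / 2 * (1 + x) ^+ 2 <=
      (n ^+ 2) `^ (p / 2) - p / 2 * n ^+ 2 by lra.
  apply: powR_sub_linear_unimodal; rewrite ?sqr_ge0 //.
  by apply/orP; left; rewrite v1 nE /=; nra.
- apply: le_trans (psi1_le_psi1N (le_trans (normr_ge0 _) sx)) _.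
  rewrite psi1E sqrrN; suff : ((1 - x) ^+ 2) `^ (p / 2) - p / 2 * (1 - x) ^+ 2 <=
      (n ^+ 2) `^ (p / 2) - p / 2 * n ^+ 2 by lra.
  apply: powR_sub_linear_unimodal; rewrite ?sqr_ge0 //.
  by apply/orP; right; rewrite (ltW v1) nE andbT; nra.
Qed.

Lemma psi1_ge_linear (K x : R) : 1 <= x -> 8 * K <= (p - 1) * x `^ (p - 1) ->
  2 * K * p * x <= psi1 x.
Proof.
have /andP[p1 p2] := p12; move=> x1 xK.
have := @psi1_ge_quadratic (2 * x) x ltac:(lra) ltac:(lra).
rewrite powRM ?ler0n //; last lra.
have : 2^-1 <= 2 `^ (p - 2) :> R.
  by rewrite -powR_inv1 ?ler0n //; apply: ler_powR; lra.
have xE : x `^ (p - 2) * x ^+ 2 = x `^ (p - 1) * x.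
  rewrite expr2 mulrA (_ : p - 2 = p - 1 - 1); last by ring.
  by congr (_ * x); rewrite mulrC mulr_powRB1 //; lra.
rewrite -!mulrA xE.
set a := 2 `^ (p - 2); set Q := x `^ (p - 1) => a2 quad.
have : 0 <= p * (p - 1) / 2 * Q * x * (a - 2^-1).
  by rewrite !mulr_ge0 ?subr_ge0 ?powR_ge0 //; lra.
have : 0 <= p * x * ((p - 1) * Q - 8 * K) by rewrite !mulr_ge0 ?subr_ge0 //; lra.
lra.
Qed.

Lemma psi1_ge_eps_sqr (eps T x : R) : eps <= (p - 1) / 2 * (1 + T) `^ (p - 2) ->
  0 <= x <= T -> p * eps * x ^+ 2 <= psi1 x.
Proof.
have /andP[p1 p2] := p12; move=> epsT /andP[x0 xT].
apply: le_trans (psi1_ge_quadratic x0 (_ : 1 + x <= 1 + T)); last lra.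
have : 0 <= p * x ^+ 2 * ((p - 1) / 2 * (1 + T) `^ (p - 2) - eps).
  by rewrite !mulr_ge0 ?sqr_ge0 ?subr_ge0 //; lra.
rewrite -!mulrA; lra.
Qed.

End Psi1.

Section Dotv.
Context {R : realType} {d : nat}.
Implicit Types a b c : 'rV[R]_d.

Lemma dotvC a b : dotv a b = dotv b a.
Proof. by apply: eq_bigr => i _; rewrite mulrC. Qed.

Lemma dotvDl a b c : dotv (a + b) c = dotv a c + dotv b c.
Proof. by rewrite /dotv -big_split; apply: eq_bigr => i _; rewrite mxE mulrDl. Qed.

Lemma dotvZl (t : R) a c : dotv (t *: a) c = t * dotv a c.
Proof. by rewrite /dotv mulr_sumr; apply: eq_bigr => i _; rewrite mxE mulrA. Qed.

Lemma dotvDr a b c : dotv c (a + b) = dotv c a + dotv c b.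
Proof. by rewrite !(dotvC c) dotvDl. Qed.

Lemma dotvZr (t : R) a c : dotv c (t *: a) = t * dotv c a.
Proof. by rewrite !(dotvC c) dotvZl. Qed.

Lemma dotvv_ge0 a : 0 <= dotv a a.
Proof. by apply: sumr_ge0 => i _; rewrite -expr2 sqr_ge0. Qed.

Lemma dotvv_eq0 a : (dotv a a == 0) = (a == 0).
Proof.
apply/eqP/eqP => [|->]; last by rewrite /dotv big1 // => i _; rewrite mxE mul0r.
move=> /psumr_eq0P a0; apply/rowP => i; rewrite mxE.
by apply/eqP; rewrite -[_ == 0]orbb -mulf_eq0 a0 // => j _; rewrite -expr2 sqr_ge0.
Qed.

Lemma normv_ge0 a : 0 <= normv a.
Proof. exact: sqrtr_ge0. Qed.

Lemma normv_eq0 a : (normv a == 0) = (a == 0).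
Proof. by rewrite sqrtr_eq0 le_eqVlt ltNge dotvv_ge0 orbF dotvv_eq0. Qed.

Lemma normv0 : normv (0 : 'rV[R]_d) = 0.
Proof. by apply/eqP; rewrite normv_eq0. Qed.

Lemma normv_gt0 a : (0 < normv a) = (a != 0).
Proof. by rewrite lt_def normv_ge0 normv_eq0 andbT. Qed.

Lemma normvK a : normv a ^+ 2 = dotv a a.
Proof. by rewrite sqr_sqrtr // dotvv_ge0. Qed.

Lemma normvD_sqr a b : normv (a + b) ^+ 2 = normv a ^+ 2 + 2 * dotv a b + normv b ^+ 2.
Proof. by rewrite !normvK dotvDl !dotvDr (dotvC b a); ring. Qed.

Lemma normr_dotv_le a b : `|dotv a b| <= normv a * normv b.
Proof.
have [->|b0] := eqVneq b 0; first by rewrite -(scale0r 0) dotvZr mul0r normr0 mulr_ge0 ?normv_ge0.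
have bb_gt0 : 0 < dotv b b by rewrite lt_def dotvv_eq0 b0 dotvv_ge0.
rewrite -ler_sqr ?nnegrE ?mulr_ge0 ?normv_ge0 // real_normK ?num_real //.
rewrite exprMn !normvK.
set s := dotv a b; set B := dotv b b.
have := dotvv_ge0 (B *: a - s *: b).
rewrite -scaleNr !dotvDl !dotvDr !dotvZl !dotvZr (dotvC b a) -/s -/B.
rewrite (_ : _ + _ = B * (dotv a a * B - s ^+ 2)); last by ring.
by rewrite pmulr_rge0 // subr_ge0.
Qed.

End Dotv.

Section Psi.
Context {R : realType} {d : nat}.
Variable p : R.
Hypothesis p12 : 1 < p < 2.

Lemma Psi_ge_psi1 (a b : 'rV[R]_d) : a != 0 ->
  normv a `^ p * psi1 p (normv b / normv a) <= Psi a b p.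
Proof.
move=> a0; rewrite /Psi a0.
have A_gt0 : 0 < normv a by rewrite normv_gt0.
have A_neq0 : normv a != 0 by rewrite gt_eqF.
have ab := normr_dotv_le a b; have abE := normvD_sqr a b.
set A := normv a in A_gt0 A_neq0 ab abE *; set B := normv b in ab abE *.
set s := dotv a b in ab abE *; set N := normv (a + b) in abE *.
have n_ge0 : 0 <= N / A by rewrite divr_ge0 ?normv_ge0 ?ltW.
have := @psi1_le_Psi_normalized _ p p12 (B / A) (s / A ^+ 2) (N / A) n_ge0.
have sB : `|s / A ^+ 2| <= B / A.
  rewrite normrM normfV (ger0_norm (sqr_ge0 A)) ler_pdivrMr ?exprn_gt0 //.
  by rewrite (_ : B / A * A ^+ 2 = A * B) //; field.
have nE : (N / A) ^+ 2 = 1 + 2 * (s / A ^+ 2) + (B / A) ^+ 2.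
  by rewrite !expr_div_n abE; field.
move=> /(_ sB nE) /(ler_wpM2l (powR_ge0 (normv a) p)) /le_trans; apply.
have NE : N `^ p = A `^ p * (N / A) `^ p.
  by rewrite -powRM ?(ltW A_gt0) // mulrC divfK.
rewrite NE powRB ?A_neq0 ?implybT // powR_mulrn ?(ltW A_gt0) //.
by rewrite -subr_ge0 [X in 0 <= X](_ : _ = 0) //; field.
Qed.

Lemma Psi0l (b : 'rV[R]_d) : Psi 0 b p = normv b `^ p.
Proof.
have /andP[p1 _] := p12.
by rewrite /Psi eqxx add0r normv0 powR0 ?subr0 // gt_eqF //; lra.
Qed.

Lemma Gamma0l (b : 'rV[R]_d) (K eps : R) : Gamma 0 b K eps p = 0.
Proof.
have /andP[p1 _] := p12.
rewrite /Gamma normv0 mulr0 ltNge normv_ge0 /= addr0 powR0 ?mulr0 ?mul0r //.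
by rewrite subr_eq0 gt_eqF.
Qed.

Lemma Gamma_le_psi1 (K eps T A B : R) :
  1 <= T -> 8 * K <= (p - 1) * T `^ (p - 1) ->
  eps <= (p - 1) / 2 * (1 + T) `^ (p - 2) -> 0 < A -> 0 <= B ->
  (if T * A <= B then 2 * K * p * A `^ (p - 1) * B else 0) +
  (if B < T * A then p * eps * A `^ (p - 2) * B ^+ 2 else 0)
    <= A `^ p * psi1 p (B / A).
Proof.
have /andP[p1 p2] := p12; move=> T1 TK epsT A_gt0 B0.
have A_neq0 : A != 0 by rewrite gt_eqF.
rewrite -ler_pdivlMr // -ltr_pdivrMr //.
have BE : B = A * (B / A) by rewrite mulrC divfK.
have x0 : 0 <= B / A := divr_ge0 B0 (ltW A_gt0).
set x := B / A in BE x0 *.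
rewrite BE !powRB ?A_neq0 ?implybT // powRr1 ?powR_mulrn ?(ltW A_gt0) //.
have [Tx|xT] := leP T x; rewrite ?addr0 ?add0r.
- rewrite (_ : _ * _ = A `^ p * (2 * K * p * x)); last by field.
  apply: ler_wpM2l; first exact: powR_ge0.
  apply: (psi1_ge_linear p12); first lra.
  apply: le_trans TK _; apply: ler_wpM2l; first lra.
  by apply: ge0_ler_powR; rewrite ?nnegrE //; lra.
- rewrite (_ : _ * _ = A `^ p * (p * eps * x ^+ 2)); last by field.
  apply: ler_wpM2l; first exact: powR_ge0.
  by apply: (psi1_ge_eps_sqr p12 epsT); rewrite x0 ltW.
Qed.

End Psi.

Section ThetaInv.
Context {R : realType}.
Variable p : R.
Hypothesis p12 : 1 < p < 2.

Definition theta_inv (T : R) : R :=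
  (p - 1) / 2 * (2 * (1 + T) ^+ 2 - 1) `^ ((p - 2) / 2).

Lemma theta_invK (T : R) : 0 <= T -> theta (theta_inv T) p = T.
Proof.
have /andP[p1 p2] := p12; move=> T0.
set X := 2 * (1 + T) ^+ 2 - 1.
have X_gt0 : 0 < X by rewrite /X; nra.
rewrite /theta (_ : (p - 1) / (2 * theta_inv T) = X `^ ((2 - p) / 2)); last first.
  rewrite /theta_inv -/X -(opprB 2 p) mulNr powRN.
  have Xr_neq0 : X `^ ((2 - p) / 2) != 0 by rewrite gt_eqF ?powR_gt0.
  by field; rewrite Xr_neq0 /= subr_eq0 gt_eqF.
rewrite -powRrM (_ : (2 - p) / 2 * (2 / (2 - p)) = 1); last by field; lra.
rewrite powRr1 ?ltW // (_ : 2^-1 * X + 2^-1 = (1 + T) ^+ 2); last by rewrite /X; field.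
by rewrite sqrtr_sqr ger0_norm; [ring | lra].
Qed.

Lemma theta_inv_gt0 (T : R) : 0 <= T -> 0 < theta_inv T.
Proof.
have /andP[p1 _] := p12; move=> T0.
by rewrite mulr_gt0 ?powR_gt0 //; nra.
Qed.

Lemma theta_inv_lt (T : R) : 0 < T -> theta_inv T < (p - 1) / 2.
Proof.
have /andP[p1 p2] := p12; move=> T0.
rewrite -[ltRHS]mulr1 ltr_pM2l; last lra.
rewrite -(opprB 2) mulNr powRN invf_lt1 ?powR_gt0 //; last nra.
have := @gt0_ltr_powR _ ((2 - p) / 2) ltac:(lra) 1 (2 * (1 + T) ^+ 2 - 1).
by rewrite powR1; apply; rewrite ?nnegrE //; nra.
Qed.

Lemma theta_inv_le (T : R) : 0 <= T -> theta_inv T <= (p - 1) / 2 * (1 + T) `^ (p - 2).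
Proof.
have /andP[p1 p2] := p12; move=> T0.
rewrite ler_pM2l; last lra.
rewrite -[in X in _ <= X](ger0_norm (_ : 0 <= 1 + T)) ?powR_normr_sqr; last lra.
by apply: le0_ger_powR; nra.
Qed.

End ThetaInv.

Unset Implicit Arguments.

Theorem lemma5 (R : realType) (K p : R) :
  0 <= K -> 1 < p < 2 ->
  exists eps : R, 0 < eps < (p - 1) / 2 /\
    forall (d : nat) (a b : 'rV[R]_d),
      Psi a b p >= Gamma a b K eps p.
Proof.
move=> K0 p12; have /andP[p1 p2] := p12.
have [T T_ge1 TK] := @exists_ge1_powR_ge _ (p - 1) (8 * K) ltac:(lra) ltac:(lra).
exists (theta_inv p T); split.
  by rewrite theta_inv_gt0 ?theta_inv_lt //; lra.
move=> d a b; have [->|a0] := eqVneq a 0.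
  by rewrite Gamma0l // Psi0l // powR_ge0.
apply: le_trans (Psi_ge_psi1 p12 b a0).
rewrite /Gamma theta_invK //; last lra.
apply: Gamma_le_psi1 => //; last exact: normv_ge0.
- by apply: theta_inv_le; lra.
- by rewrite normv_gt0.
Qed.
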